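(* Let $\rho^{(2)}_n := 6-4(1+\frac1n)^{3/2}-4(1-\frac1n)^{3/2}+(1+\frac2n)^{3/2}+(1-\frac2n)^{3/2}$ for $n\ge2$. Let $\rho=\{\rho_n\}_{n\ge2}$ be a Rellich weight such that $\rho_n\ge\rho^{(2)}_n$ for all $n\ge2$. Then \[ \sum_{n=2}^{\infty}n^3\left(\rho_n-\rho^{(2)}_n\right)\le 8\sqrt2-3\sqrt3 . \]
   Context: $H_0^2(\mathbb{N}_0):=\{u\in\ell^2(\mathbb{N}_0): u_0=u_1=0\}$. The discrete Dirichlet Laplacian acts by $(-\Delta u)_0=2u_0-u_1$, $(-\Delta u)_n=-u_{n-1}+2u_n-u_{n+1}$ for $n\ge1$. A positive sequence $\{\rho_n\}_{n\ge2}$ is called a Rellich weight if $\sum_{n=1}^\infty|(-\Delta u)_n|^2\ge\sum_{n=2}^\infty\rho_n|u_n|^2$ for all $u\in H_0^2(\mathbb{N}_0)$. *)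

From Stdlib Require Import Reals Lra.
From Coquelicot Require Import Coquelicot.
Open Scope R_scope.

Definition in_H02 (u : nat -> C) : Prop :=
  u 0%nat = 0%C /\ u 1%nat = 0%C /\ ex_series (fun n => (Cmod (u n))^2).

Definition neg_lap (u : nat -> C) (n : nat) : C :=
  match n with
  | O => (2 * u 0%nat - u 1%nat)%C
  | S m => (- u m + 2 * u n - u (S n))%C
  end.

(* Rellich weight: rho_n > 0 for n >= 2 and
   sum_{n>=1} |(-Δu)_n|^2 >= sum_{n>=2} rho_n |u_n|^2 for all u in H_0^2.
   (The LHS is finite for u in l^2, so the RHS converges.) *)
Definition rellich_weight (rho : nat -> R) : Prop :=
  (forall n, (2 <= n)%nat -> 0 < rho n) /\
  forall u : nat -> C, in_H02 u ->
    ex_series (fun k => rho (k + 2)%nat * (Cmod (u (k + 2)%nat))^2) /\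
    Series (fun k => rho (k + 2)%nat * (Cmod (u (k + 2)%nat))^2)
      <= Series (fun k => (Cmod (neg_lap u (k + 1)%nat))^2).

Definition pow32 (x : R) : R := (sqrt x)^3.

Definition rho2 (n : nat) : R :=
  6 - 4 * pow32 (1 + 1 / INR n) - 4 * pow32 (1 - 1 / INR n)
    + pow32 (1 + 2 / INR n) + pow32 (1 - 2 / INR n).

(* Test the Rellich inequality on [u_n = n^(3/2) v_n].  Summing by parts twice
   (the ground-state representation) turns [sum |Δu|² - sum rho2 |u|²] into a sum of
   local quadratic forms in [v].  Take [v_0 = v_1 = 0], [v = 1] on [2, M], and let [v]
   decay to 0 on [M, K] with steps proportional to [1/j].  The forms at [n = 0, 1] see
   only the jump of [v] at [n = 2] and contribute exactly [8√2 - 3√3]; the remaining ones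
   are bounded, up to a telescoping term, by a Hardy-type energy of the cutoff, of order
   [(M + H)/H²] with [H = Σ_{M<j≤K} 1/j], which tends to 0 as [K → ∞].  Hence
   [Σ_{n≤M} n³ (ρ_n - rho2_n) ≤ 8√2 - 3√3] for every [M]. *)

From Stdlib Require Import Reals Lra Lia Psatz.
From Coquelicot Require Import Coquelicot.
Open Scope R_scope.

Fixpoint fsum (f : nat -> R) (n : nat) : R :=
  match n with O => 0 | S m => fsum f m + f m end.

Lemma fsum_ext f g n : (forall i, (i < n)%nat -> f i = g i) -> fsum f n = fsum g n.
Proof.
  induction n as [|n IH]; intros H; simpl; [reflexivity|].
  rewrite IH by (intros; apply H; lia). now rewrite H by lia.
Qed.

Lemma fsum_le f g n : (forall i, (i < n)%nat -> f i <= g i) -> fsum f n <= fsum g n.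
Proof.
  induction n as [|n IH]; intros H; simpl; [lra|].
  assert (fsum f n <= fsum g n) by (apply IH; intros; apply H; lia).
  specialize (H n ltac:(lia)). lra.
Qed.

Lemma fsum_eq0 f n : (forall i, (i < n)%nat -> f i = 0) -> fsum f n = 0.
Proof.
  induction n as [|n IH]; intros H; simpl; [reflexivity|].
  rewrite IH by (intros; apply H; lia). rewrite H by lia. ring.
Qed.

Lemma fsum_nonneg f n : (forall i, (i < n)%nat -> 0 <= f i) -> 0 <= fsum f n.
Proof.
  intros H. rewrite <- (fsum_eq0 (fun _ => 0) n) by reflexivity. now apply fsum_le.
Qed.

Lemma fsum_add f g n : fsum (fun i => f i + g i) n = fsum f n + fsum g n.
Proof. induction n as [|n IH]; simpl; [lra|]. rewrite IH. ring. Qed.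

Lemma fsum_sub f g n : fsum (fun i => f i - g i) n = fsum f n - fsum g n.
Proof. induction n as [|n IH]; simpl; [lra|]. rewrite IH. ring. Qed.

Lemma fsum_scal c f n : fsum (fun i => c * f i) n = c * fsum f n.
Proof. induction n as [|n IH]; simpl; [lra|]. rewrite IH. ring. Qed.

Lemma fsum_const c n : fsum (fun _ => c) n = INR n * c.
Proof. induction n as [|n IH]; simpl fsum; [simpl; lra|]. rewrite IH, S_INR. ring. Qed.

Lemma fsum_split f a n : fsum f (a + n) = fsum f a + fsum (fun i => f (a + i)%nat) n.
Proof.
  induction n as [|n IH]; simpl; [rewrite Nat.add_0_r; lra|].
  rewrite Nat.add_succ_r; simpl. rewrite IH. ring.
Qed.

Lemma fsum_telescope g n : fsum (fun i => g (S i) - g i) n = g n - g O.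
Proof. induction n as [|n IH]; simpl; [lra|]. rewrite IH. ring. Qed.

Lemma fsum_le_extend f g n N : (n <= N)%nat ->
  (forall k, (k < n)%nat -> f k = g k) ->
  (forall k, (n <= k < N)%nat -> 0 <= g k) -> fsum f n <= fsum g N.
Proof.
  intros HnN Heq Hpos. replace N with (n + (N - n))%nat by lia.
  rewrite fsum_split, (fsum_ext f g n Heq).
  enough (0 <= fsum (fun i => g (n + i)%nat) (N - n)) by lra.
  apply fsum_nonneg; intros; apply Hpos; lia.
Qed.

Lemma fsum_stable f N n : (forall k, (N <= k)%nat -> f k = 0) -> (N <= n)%nat ->
  fsum f n = fsum f N.
Proof.
  intros H Hn. replace n with (N + (n - N))%nat by lia.
  rewrite fsum_split, (fsum_eq0 (fun i => f (N + i)%nat)); [ring|].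
  intros; apply H; lia.
Qed.

Lemma sum_n_fsum f n : sum_n f n = fsum f (S n).
Proof.
  induction n as [|n IH]; [rewrite sum_O; simpl; lra|].
  now rewrite sum_Sn, IH.
Qed.

Lemma is_series_fsum f N : (forall k, (N <= k)%nat -> f k = 0) -> is_series f (fsum f N).
Proof.
  intros H. change (is_lim_seq (sum_n f) (fsum f N)).
  apply is_lim_seq_ext_loc with (fun _ => fsum f N); [|apply is_lim_seq_const].
  exists N. intros n Hn. rewrite sum_n_fsum. symmetry; apply fsum_stable; auto.
Qed.

Lemma Series_fsum f N : (forall k, (N <= k)%nat -> f k = 0) -> Series f = fsum f N.
Proof. intros H. now apply is_series_unique, is_series_fsum. Qed.

Lemma series_nonneg_bounded (a : nat -> R) C :
  (forall k, 0 <= a k) -> (forall n, fsum a n <= C) -> ex_series a /\ Series a <= C.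
Proof.
  intros Hpos Hle.
  assert (Hlim : ex_finite_lim_seq (sum_n a)).
  { apply ex_finite_lim_seq_incr with C.
    - intros n. rewrite !sum_n_fsum. simpl fsum. specialize (Hpos (S n)). lra.
    - intros n. rewrite sum_n_fsum. apply Hle. }
  destruct Hlim as [l Hl].
  split; [now exists l|].
  rewrite (is_series_unique a l Hl).
  apply (is_lim_seq_le (sum_n a) (fun _ => C) l C); [|exact Hl|apply is_lim_seq_const].
  intros n. rewrite sum_n_fsum. apply Hle.
Qed.

Lemma pow32_sq x : 0 <= x -> pow32 x ^ 2 = x ^ 3.
Proof.
  intros Hx. unfold pow32.
  replace ((sqrt x ^ 3) ^ 2) with ((sqrt x * sqrt x) ^ 3) by ring.
  now rewrite sqrt_sqrt.
Qed.

Lemma pow32_mul x y : 0 <= x -> 0 <= y -> pow32 x * pow32 y = pow32 (x * y).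
Proof. intros. unfold pow32. rewrite sqrt_mult by assumption. ring. Qed.

Lemma pow32_le x y : 0 <= x <= y -> pow32 x <= pow32 y.
Proof. intros Hxy. apply pow_incr. split; [apply sqrt_pos | apply sqrt_le_1_alt; lra]. Qed.

Lemma pow32_of_sq a : 0 <= a -> pow32 (a * a) = a ^ 3.
Proof. intros Ha. unfold pow32. now rewrite sqrt_square. Qed.

Definition ground_state (k : nat) : R := pow32 (INR k).

Lemma ground_state_sq k : ground_state k ^ 2 = INR k ^ 3.
Proof. apply pow32_sq, pos_INR. Qed.

Lemma ground_state_values :
  ground_state 0 = 0 /\ ground_state 1 = 1 /\
  ground_state 2 = 2 * sqrt 2 /\ ground_state 3 = 3 * sqrt 3.
Proof.
  unfold ground_state, pow32. simpl INR. rewrite sqrt_0, sqrt_1.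
  replace (1 + 1 + 1) with 3 by ring. replace (1 + 1) with 2 by ring.
  replace (sqrt 2 ^ 3) with (sqrt 2 * sqrt 2 * sqrt 2) by ring.
  replace (sqrt 3 ^ 3) with (sqrt 3 * sqrt 3 * sqrt 3) by ring.
  rewrite !sqrt_sqrt by lra. repeat split; ring.
Qed.

Lemma rho2_ground_state m : rho2 (m + 2) * ground_state (m + 2) =
  ground_state m - 4 * ground_state (m + 1) + 6 * ground_state (m + 2)
  - 4 * ground_state (m + 3) + ground_state (m + 4).
Proof.
  unfold rho2, ground_state. rewrite !plus_INR. simpl INR.
  set (x := INR m). assert (Hx : 0 <= x) by apply pos_INR.
  assert (Hrescale : forall c, - 2 <= c ->
    pow32 (1 + c / (x + (1 + 1))) * pow32 (x + (1 + 1)) = pow32 (x + (1 + 1) + c)).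
  { intros c Hc. rewrite pow32_mul; [f_equal; field; lra| |lra].
    apply Rmult_le_reg_r with (x + (1 + 1)); [lra|].
    rewrite Rmult_0_l, Rmult_plus_distr_r. field_simplify; lra. }
  rewrite !Rmult_plus_distr_r, !Rmult_minus_distr_r.
  rewrite !Rmult_assoc, !Hrescale by lra.
  replace (1 - 1 / (x + (1 + 1))) with (1 + (-1) / (x + (1 + 1))) by (field; lra).
  replace (1 - 2 / (x + (1 + 1))) with (1 + (-2) / (x + (1 + 1))) by (field; lra).
  rewrite !Hrescale by lra.
  replace (x + (1 + 1) + 1) with (x + (1 + 1 + 1)) by ring.
  replace (x + (1 + 1) + -1) with (x + 1) by ring.
  replace (x + (1 + 1) + 2) with (x + (1 + 1 + 1 + 1)) by ring.
  replace (x + (1 + 1) + -2) with x by ring.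
  ring.
Qed.

Lemma fsum_second_diff_by_parts (f c : nat -> R) N :
  fsum (fun k => (f k - 2 * f (k + 1)%nat + f (k + 2)%nat) * c k) N =
  fsum (fun k => f (k + 2)%nat * (c k - 2 * c (k + 1)%nat + c (k + 2)%nat)) N
  + (2 * f (N + 1)%nat * c N - f N * c N - f (N + 1)%nat * c (N + 1)%nat)
  - (2 * f 1%nat * c 0%nat - f 0%nat * c 0%nat - f 1%nat * c 1%nat).
Proof.
  induction N as [|N IH]; simpl fsum; [simpl; ring|].
  rewrite IH. replace (S N + 1)%nat with (N + 2)%nat by lia.
  replace (S N) with (N + 1)%nat by lia. replace (N + 1 + 1)%nat with (N + 2)%nat by lia.
  ring.
Qed.

Definition ground_form (v : nat -> R) (k : nat) : R :=
  2 * ground_state k * ground_state (k + 1) * (v k - v (k + 1)%nat) ^ 2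
  + 2 * ground_state (k + 1) * ground_state (k + 2) * (v (k + 1)%nat - v (k + 2)%nat) ^ 2
  - ground_state k * ground_state (k + 2) * (v k - v (k + 2)%nat) ^ 2.

(* Pointwise [(Δ²(g v))² = ground_form v + Δ²(g v²) Δ²g]; summing by parts moves
   the second difference onto [Δ²g], and [Δ⁴g = rho2 g]. *)
Lemma ground_state_representation v N :
  v 1%nat = 0 -> (forall k, (N <= k)%nat -> v k = 0) ->
  let w k := ground_state k * v k in
  fsum (fun k => (w k - 2 * w (k + 1)%nat + w (k + 2)%nat) ^ 2) N =
  fsum (ground_form v) N + fsum (fun k => rho2 (k + 2) * w (k + 2)%nat ^ 2) N.
Proof.
  intros Hv1 HvN w.
  set (f k := ground_state k * v k ^ 2).
  set (c k := ground_state k - 2 * ground_state (k + 1) + ground_state (k + 2)).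
  rewrite (fsum_ext _ (fun k => ground_form v k + (f k - 2 * f (k + 1)%nat + f (k + 2)%nat) * c k))
    by (intros; unfold ground_form, w, f, c; ring).
  rewrite fsum_add, fsum_second_diff_by_parts. f_equal.
  destruct ground_state_values as [G0 _].
  assert (f0 : f 0%nat = 0) by (unfold f; rewrite G0; ring).
  assert (f1 : f 1%nat = 0) by (unfold f; rewrite Hv1; ring).
  assert (fN : f N = 0) by (unfold f; rewrite HvN by lia; ring).
  assert (fN1 : f (N + 1)%nat = 0) by (unfold f; rewrite HvN by lia; ring).
  rewrite f0, f1, fN, fN1.
  transitivity (fsum (fun k => f (k + 2)%nat * (c k - 2 * c (k + 1)%nat + c (k + 2)%nat)) N);
    [ring|].
  apply fsum_ext. intros i _. unfold f, c, w.
  replace (i + 2 + 1)%nat with (i + 3)%nat by lia. replace (i + 2 + 2)%nat with (i + 4)%nat by lia.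
  replace (i + 1 + 1)%nat with (i + 2)%nat by lia. replace (i + 1 + 2)%nat with (i + 3)%nat by lia.
  transitivity (ground_state (i + 2) * v (i + 2)%nat ^ 2 * (rho2 (i + 2) * ground_state (i + 2)));
    [rewrite rho2_ground_state|]; ring.
Qed.

Lemma cube_above_tangent a b : 0 <= a -> 0 <= b -> b ^ 3 + 3 / 2 * b * (a ^ 2 - b ^ 2) <= a ^ 3.
Proof.
  intros Ha Hb.
  assert (0 <= (a - b) ^ 2 * (a + b / 2)) by (apply Rmult_le_pos; [apply pow2_ge_0|lra]).
  nra.
Qed.

Lemma pow32_mul_shift_le x : 0 <= x -> pow32 x * pow32 (x + 2) <= (x + 2) ^ 3.
Proof.
  intros Hx. rewrite pow32_mul, <- (pow32_of_sq (x + 2)) by lra.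
  apply pow32_le. nra.
Qed.

(* With [t = √((x+1)(x+2))], [u = √(x(x+2))], [w = √((x+1)(x+3))] the left side is
   [4t³ - 2u³ - 2w³]; bound [u³] and [w³] below by tangents at [t²]. *)
Lemma pow32_cross_diff_le x : 0 <= x ->
  2 * pow32 (x + 2) * (pow32 (x + 1) - pow32 x)
  - 2 * pow32 (x + 1) * (pow32 (x + 3) - pow32 (x + 2)) <= 3 * (x + 2).
Proof.
  intros Hx. unfold pow32.
  set (s0 := sqrt x). set (s1 := sqrt (x + 1)). set (s2 := sqrt (x + 2)). set (s3 := sqrt (x + 3)).
  assert (H0 : s0 * s0 = x) by (apply sqrt_sqrt; lra).
  assert (H1 : s1 * s1 = x + 1) by (apply sqrt_sqrt; lra).
  assert (H2 : s2 * s2 = x + 2) by (apply sqrt_sqrt; lra).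
  assert (H3 : s3 * s3 = x + 3) by (apply sqrt_sqrt; lra).
  assert (0 <= s0 /\ 0 <= s1 /\ 0 <= s2 /\ 0 <= s3) as (P0 & P1 & P2 & P3)
    by (repeat split; apply sqrt_pos).
  set (t := s1 * s2). set (u := s0 * s2). set (w := s1 * s3).
  assert (Ht : t ^ 2 = (x + 1) * (x + 2))
    by (transitivity (s1 * s1 * (s2 * s2)); [unfold t; ring | now rewrite H1, H2]).
  assert (Hu : u ^ 2 = x * (x + 2))
    by (transitivity (s0 * s0 * (s2 * s2)); [unfold u; ring | now rewrite H0, H2]).
  assert (Hw : w ^ 2 = (x + 1) * (x + 3))
    by (transitivity (s1 * s1 * (s3 * s3)); [unfold w; ring | now rewrite H1, H3]).
  assert (0 <= t /\ 0 <= u /\ 0 <= w) as (Pt & Pu & Pw) by (unfold t, u, w; repeat split; nra).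
  pose proof (cube_above_tangent u t Pu Pt) as Tu.
  pose proof (cube_above_tangent w t Pw Pt) as Tw.
  assert (t <= x + 2) by nra.
  replace (2 * s2 ^ 3 * (s1 ^ 3 - s0 ^ 3) - 2 * s1 ^ 3 * (s3 ^ 3 - s2 ^ 3))
    with (4 * t ^ 3 - 2 * u ^ 3 - 2 * w ^ 3) by (unfold t, u, w; ring).
  nra.
Qed.

Definition flux (v : nat -> R) (k : nat) : R :=
  2 * ground_state k * (ground_state (k + 2) - ground_state (k + 1)) * (v (k + 1)%nat - v k) ^ 2.

Lemma ground_form_le v k :
  ground_form v k <=
  INR (k + 2) ^ 3 * (v (k + 2)%nat - 2 * v (k + 1)%nat + v k) ^ 2
  + 3 * INR (k + 2) * (v (k + 2)%nat - v (k + 1)%nat) ^ 2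
  + (flux v (k + 1) - flux v k).
Proof.
  unfold ground_form, flux, ground_state.
  replace (k + 1 + 1)%nat with (k + 2)%nat by lia.
  replace (k + 1 + 2)%nat with (k + 3)%nat by lia.
  rewrite !plus_INR.
  replace (INR 1) with 1 by reflexivity.
  replace (INR 2) with 2 by (simpl; ring). replace (INR 3) with 3 by (simpl; ring).
  set (x := INR k). assert (Hx : 0 <= x) by apply pos_INR.
  pose proof (pow32_mul_shift_le x Hx) as Hmul.
  pose proof (pow32_cross_diff_le x Hx) as Hcross.
  set (p := v k) in *. set (q := v (k + 1)%nat). set (r := v (k + 2)%nat).
  (* [ground_form - Δflux = g_k g_(k+2) (r - 2q + p)²
       + (2 g_(k+2) (g_(k+1) - g_k) - 2 g_(k+1) (g_(k+3) - g_(k+2))) (r - q)²] *)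
  assert (0 <= (r - 2 * q + p) ^ 2) by apply pow2_ge_0.
  assert (0 <= (r - q) ^ 2) by apply pow2_ge_0.
  nra.
Qed.

Definition harmonic (n : nat) : R := fsum (fun i => 1 / INR (i + 1)) n.

Lemma harmonic_double n : (1 <= n)%nat -> harmonic n + 1 / 2 <= harmonic (n + n).
Proof.
  intros Hn. unfold harmonic. rewrite fsum_split.
  assert (Hp : 0 < INR n) by (apply lt_0_INR; lia).
  enough (fsum (fun _ => 1 / (2 * INR n)) n <= fsum (fun i => 1 / INR (n + i + 1)) n)
    by (rewrite fsum_const in *;
        replace (INR n * (1 / (2 * INR n))) with (1 / 2) in * by (field; lra); lra).
  apply fsum_le. intros i Hi.
  assert (0 < INR (n + i + 1)) by (apply lt_0_INR; lia).
  assert (INR (n + i + 1) <= 2 * INR n)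
    by (replace (2 * INR n) with (INR (n + n)) by (rewrite plus_INR; ring); apply le_INR; lia).
  apply Rmult_le_reg_r with (2 * INR n * INR (n + i + 1)); [nra|].
  field_simplify; lra.
Qed.

Lemma harmonic_pow2_ge M j : (1 <= M)%nat -> harmonic M + INR j / 2 <= harmonic (2 ^ j * M).
Proof.
  intros HM. induction j as [|j IH]; [simpl; rewrite Nat.add_0_r; lra|].
  assert (Hpos : (1 <= 2 ^ j * M)%nat)
    by (assert (1 <= 2 ^ j)%nat by (apply Nat.neq_0_lt_0, Nat.pow_nonzero; lia); nia).
  replace (2 ^ S j * M)%nat with (2 ^ j * M + 2 ^ j * M)%nat by (simpl; lia).
  pose proof (harmonic_double _ Hpos). rewrite S_INR. lra.
Qed.

Lemma harmonic_unbounded M B : (1 <= M)%nat ->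
  exists K, (M < K)%nat /\ B <= harmonic K - harmonic M.
Proof.
  intros HM. destruct (INR_archimed 1 (2 * B)) as [j Hj]; [lra|].
  assert (1 <= 2 ^ j)%nat by (apply Nat.neq_0_lt_0, Nat.pow_nonzero; lia).
  exists (2 ^ S j * M)%nat. split; [simpl; nia|].
  pose proof (harmonic_pow2_ge M (S j) HM). rewrite S_INR in *. lra.
Qed.

Lemma harmonic_sub M P :
  harmonic (M + P) - harmonic M = fsum (fun i => 1 / INR (M + i + 1)) P.
Proof. unfold harmonic. rewrite fsum_split. ring. Qed.

Lemma step_window_bounds y k : 0 < y -> y <= k -> 0 <= 1 / y - y / k ^ 2 <= 1 / y.
Proof.
  intros Hy Hk.
  assert (y / k ^ 2 <= 1 / y).
  { apply Rmult_le_reg_r with (k ^ 2 * y); [apply Rmult_lt_0_compat; [apply pow_lt|]; lra|].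
    replace (y / k ^ 2 * (k ^ 2 * y)) with (y ^ 2) by (field; lra).
    replace (1 / y * (k ^ 2 * y)) with (k ^ 2) by (field; lra). apply pow_incr; lra. }
  assert (0 <= y / k ^ 2) by (apply Rdiv_le_0_compat; [lra|apply pow_lt; lra]).
  lra.
Qed.

Lemma energy_step_bound x k : 1 <= x -> x + 1 <= k ->
  (x + 1) ^ 3 * ((1 / (x + 1) - (x + 1) / k ^ 2) - (1 / x - x / k ^ 2)) ^ 2
  + 3 * (x + 1) * (1 / (x + 1) - (x + 1) / k ^ 2) ^ 2
  <= 11 / (x + 1) + 2 / k.
Proof.
  intros Hx Hk.
  set (A := 1 / (x * (x + 1))). set (B := 1 / k ^ 2).
  replace ((1 / (x + 1) - (x + 1) / k ^ 2) - (1 / x - x / k ^ 2)) with (- (A + B))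
    by (unfold A, B; field; lra).
  assert (HA : (x + 1) ^ 3 * A ^ 2 <= 4 / (x + 1)).
  { unfold A.
    replace ((x + 1) ^ 3 * (1 / (x * (x + 1))) ^ 2) with ((x + 1) / x ^ 2) by (field; lra).
    apply Rmult_le_reg_r with (x ^ 2 * (x + 1)); [nra|].
    replace ((x + 1) / x ^ 2 * (x ^ 2 * (x + 1))) with ((x + 1) ^ 2) by (field; lra).
    replace (4 / (x + 1) * (x ^ 2 * (x + 1))) with (4 * x ^ 2) by (field; lra). nra. }
  assert (HB : (x + 1) ^ 3 * B ^ 2 <= 1 / k).
  { unfold B. replace ((x + 1) ^ 3 * (1 / k ^ 2) ^ 2) with ((x + 1) ^ 3 / k ^ 4) by (field; lra).
    apply Rmult_le_reg_r with (k ^ 4); [apply pow_lt; lra|].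
    replace ((x + 1) ^ 3 / k ^ 4 * k ^ 4) with ((x + 1) ^ 3) by (field; lra).
    replace (1 / k * k ^ 4) with (k ^ 3) by (field; lra). apply pow_incr; lra. }
  assert (HAB : (x + 1) ^ 3 * (- (A + B)) ^ 2
                <= 2 * ((x + 1) ^ 3 * A ^ 2) + 2 * ((x + 1) ^ 3 * B ^ 2)).
  { assert (0 <= (x + 1) ^ 3) by (apply pow_le; lra).
    assert (0 <= (A - B) ^ 2) by apply pow2_ge_0. nra. }
  destruct (step_window_bounds (x + 1) k ltac:(lra) Hk) as [Hb0 Hb1].
  set (b := 1 / (x + 1) - (x + 1) / k ^ 2) in *.
  assert (Hb : 3 * (x + 1) * b ^ 2 <= 3 / (x + 1)).
  { assert (Hinv : (x + 1) * (1 / (x + 1)) = 1) by (field; lra).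
    assert ((x + 1) * b <= (x + 1) * (1 / (x + 1))) by (apply Rmult_le_compat_l; lra).
    unfold Rdiv. nra. }
  unfold Rdiv in *. lra.
Qed.

Lemma INR_sub_div_le m n : (0 < n)%nat -> INR (n - m) * (1 / INR n) <= 1.
Proof.
  intros Hn. assert (0 < INR n) by (apply lt_0_INR; lia).
  assert (INR (n - m) <= INR n) by (apply le_INR; lia).
  apply Rmult_le_reg_r with (INR n); [lra|]. field_simplify; lra.
Qed.

Section Cutoff.

Variables M K : nat.

(* The steps follow [1/(j+1)] on the window [M <= j < K]; the correction
   [(j+1)/K²] makes the last one vanish, so the cutoff reaches 0 with zero slope. *)
Definition cutoff_step (j : nat) : R :=
  if andb (M <=? j)%nat (j <? K)%nat then 1 / INR (j + 1) - INR (j + 1) / INR K ^ 2 else 0.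

Definition cutoff_mass : R := fsum cutoff_step K.

Definition cutoff (j : nat) : R :=
  if (j <=? 1)%nat then 0 else 1 - fsum cutoff_step j / cutoff_mass.

Lemma cutoff_step_out j : (j < M \/ K <= j)%nat -> cutoff_step j = 0.
Proof.
  intros H. unfold cutoff_step.
  destruct (M <=? j)%nat eqn:E1, (j <? K)%nat eqn:E2; simpl; auto.
  apply Nat.leb_le in E1. apply Nat.ltb_lt in E2. lia.
Qed.

Lemma cutoff_step_in j : (M <= j < K)%nat ->
  cutoff_step j = 1 / INR (j + 1) - INR (j + 1) / INR K ^ 2.
Proof.
  intros H. unfold cutoff_step.
  destruct (M <=? j)%nat eqn:E1, (j <? K)%nat eqn:E2; simpl; auto.
  all: try apply Nat.leb_gt in E1; try apply Nat.ltb_ge in E2; lia.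
Qed.

Lemma cutoff_step_bounds j : 0 <= cutoff_step j <= 1 / INR (j + 1).
Proof.
  assert (0 < INR (j + 1)) by (apply lt_0_INR; lia).
  assert (0 <= 1 / INR (j + 1)) by (apply Rlt_le, Rdiv_lt_0_compat; lra).
  destruct (Nat.le_gt_cases M j), (Nat.lt_ge_cases j K).
  - rewrite cutoff_step_in by lia. apply step_window_bounds; auto. apply le_INR; lia.
  - rewrite cutoff_step_out by lia. lra.
  - rewrite cutoff_step_out by lia. lra.
  - rewrite cutoff_step_out by lia. lra.
Qed.

Lemma cutoff_eq1 j : (2 <= j <= M)%nat -> cutoff j = 1.
Proof.
  intros Hj. unfold cutoff. destruct (j <=? 1)%nat eqn:E; [apply Nat.leb_le in E; lia|].
  rewrite fsum_eq0 by (intros; apply cutoff_step_out; lia). unfold Rdiv. ring.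
Qed.

Hypothesis HMK : (M < K)%nat.

Lemma cutoff_step_last : cutoff_step (K - 1) = 0.
Proof.
  rewrite cutoff_step_in by lia. replace (K - 1 + 1)%nat with K by lia.
  assert (0 < INR K) by (apply lt_0_INR; lia). field; lra.
Qed.

Lemma cutoff_mass_ge : harmonic K - harmonic M - 1 <= cutoff_mass.
Proof.
  unfold cutoff_mass. replace K with (M + (K - M))%nat by lia.
  rewrite harmonic_sub, fsum_split, (fsum_eq0 cutoff_step M)
    by (intros; apply cutoff_step_out; lia).
  assert (HK : 0 < INR K) by (apply lt_0_INR; lia).
  assert (Hlow : fsum (fun i => 1 / INR (M + i + 1) - 1 / INR K) (K - M)
                 <= fsum (fun i => cutoff_step (M + i)) (K - M)).
  { apply fsum_le. intros i Hi. rewrite cutoff_step_in by lia.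
    assert (INR (M + i + 1) <= INR K) by (apply le_INR; lia).
    assert (0 < INR (M + i + 1)) by (apply lt_0_INR; lia).
    enough (INR (M + i + 1) / INR K ^ 2 <= 1 / INR K) by lra.
    apply Rmult_le_reg_r with (INR K ^ 2); [apply pow_lt; lra|].
    replace (INR (M + i + 1) / INR K ^ 2 * INR K ^ 2) with (INR (M + i + 1)) by (field; lra).
    replace (1 / INR K * INR K ^ 2) with (INR K) by (field; lra). lra. }
  rewrite fsum_sub, fsum_const in Hlow.
  pose proof (INR_sub_div_le M K ltac:(lia)). lra.
Qed.

Definition cutoff_energy (k : nat) : R :=
  INR (k + 2) ^ 3 * (cutoff_step (k + 1) - cutoff_step k) ^ 2
  + 3 * INR (k + 2) * cutoff_step (k + 1) ^ 2.

Lemma cutoff_energy_nonneg k : 0 <= cutoff_energy k.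
Proof.
  unfold cutoff_energy. assert (0 <= INR (k + 2)) by apply pos_INR.
  assert (0 <= INR (k + 2) ^ 3) by (apply pow_le; lra).
  assert (0 <= (cutoff_step (k + 1) - cutoff_step k) ^ 2) by apply pow2_ge_0.
  assert (0 <= cutoff_step (k + 1) ^ 2) by apply pow2_ge_0.
  nra.
Qed.

Lemma cutoff_energy_entry : (1 <= M)%nat -> cutoff_energy (M - 1) <= INR M + 4.
Proof.
  intros HM. unfold cutoff_energy. rewrite (cutoff_step_out (M - 1)) by lia.
  replace (M - 1 + 1)%nat with M by lia. replace (M - 1 + 2)%nat with (M + 1)%nat by lia.
  destruct (cutoff_step_bounds M) as [Hb0 Hb1].
  rewrite plus_INR in *. simpl INR in *.
  set (y := INR M + 1) in *. set (b := cutoff_step M) in *.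
  assert (Hy : y = INR M + 1) by reflexivity.
  assert (Hy1 : 1 <= y) by (pose proof (pos_INR M); lra).
  assert (Hyb : y * b <= 1).
  { assert (y * b <= y * (1 / y)) by (apply Rmult_le_compat_l; lra).
    replace (y * (1 / y)) with 1 in * by (field; lra). lra. }
  assert (b <= 1) by nra.
  assert (0 <= y * b) by nra.
  replace (y ^ 3 * (b - 0) ^ 2) with (y * (y * b) ^ 2) by ring.
  replace (3 * y * b ^ 2) with (3 * b * (y * b)) by ring.
  assert ((y * b) ^ 2 <= 1) by nra.
  assert (y * (y * b) ^ 2 <= y * 1) by (apply Rmult_le_compat_l; lra).
  assert (3 * b * (y * b) <= 3) by nra.
  lra.
Qed.

Lemma cutoff_energy_window k : (M <= k < K)%nat ->
  cutoff_energy k <= 11 / INR (k + 1) + 2 / INR K.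
Proof.
  intros Hk.
  assert (Hx : 1 <= INR (k + 1)) by (apply (le_INR 1); lia).
  assert (0 < 11 / INR (k + 1) + 2 / INR K)
    by (assert (0 < INR K) by (apply lt_0_INR; lia);
        apply Rplus_lt_0_compat; apply Rdiv_lt_0_compat; lra).
  destruct (Nat.lt_ge_cases (k + 1) K) as [Hlt | Hge].
  - unfold cutoff_energy. rewrite !cutoff_step_in by lia.
    replace (k + 1 + 1)%nat with (k + 2)%nat by lia.
    replace (INR (k + 2)) with (INR (k + 1) + 1) by (rewrite !plus_INR; simpl; ring).
    set (x := INR (k + 1)) in *.
    assert (x + 1 <= INR K) by (unfold x; rewrite <- S_INR; apply le_INR; lia).
    pose proof (energy_step_bound x (INR K) Hx ltac:(assumption)) as Hstep.
    assert (11 / (x + 1) <= 11 / x)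
      by (apply Rmult_le_compat_l; [lra|apply Rinv_le_contravar; lra]).
    lra.
  - replace k with (K - 1)%nat by lia. unfold cutoff_energy.
    rewrite cutoff_step_last, (cutoff_step_out (K - 1 + 1)) by lia.
    replace (K - 1)%nat with k by lia. lra.
Qed.

Lemma cutoff_energy_sum : (1 <= M)%nat ->
  fsum cutoff_energy K <= INR M + 6 + 11 * (harmonic K - harmonic M).
Proof.
  intros HM.
  replace K with ((M - 1) + (1 + (K - M)))%nat at 1 by lia.
  rewrite !fsum_split, (fsum_eq0 cutoff_energy (M - 1))
    by (intros; unfold cutoff_energy; rewrite !cutoff_step_out by lia; ring).
  simpl fsum. rewrite Nat.add_0_r.
  assert (Hwin : fsum (fun i => cutoff_energy (M - 1 + S i)) (K - M)
                 <= fsum (fun i => 11 * (1 / INR (M + i + 1)) + 2 * (1 / INR K)) (K - M)).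
  { apply fsum_le. intros i Hi. replace (M - 1 + S i)%nat with (M + i)%nat by lia.
    pose proof (cutoff_energy_window (M + i) ltac:(lia)). unfold Rdiv in *. lra. }
  rewrite fsum_add, !fsum_scal, fsum_const, <- harmonic_sub in Hwin.
  replace (M + (K - M))%nat with K in Hwin by lia.
  pose proof (INR_sub_div_le M K ltac:(lia)).
  pose proof (cutoff_energy_entry HM). lra.
Qed.

Hypothesis Hmass : 0 < cutoff_mass.

Lemma cutoff_eq0 j : (K <= j)%nat -> cutoff j = 0.
Proof.
  intros Hj. unfold cutoff. destruct (j <=? 1)%nat; [reflexivity|].
  rewrite (fsum_stable _ K) by (auto; intros; apply cutoff_step_out; lia).
  fold cutoff_mass. field. lra.
Qed.

Lemma cutoff_diff j : (2 <= j)%nat -> cutoff (j + 1) - cutoff j = - cutoff_step j / cutoff_mass.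
Proof.
  intros Hj. unfold cutoff.
  destruct (j <=? 1)%nat eqn:E; [apply Nat.leb_le in E; lia|].
  destruct (j + 1 <=? 1)%nat eqn:E'; [apply Nat.leb_le in E'; lia|].
  replace (j + 1)%nat with (S j) by lia. simpl fsum. field. lra.
Qed.

Lemma cutoff_energy_eq k : (2 <= k)%nat ->
  INR (k + 2) ^ 3 * (cutoff (k + 2) - 2 * cutoff (k + 1) + cutoff k) ^ 2
  + 3 * INR (k + 2) * (cutoff (k + 2) - cutoff (k + 1)) ^ 2
  = cutoff_energy k / cutoff_mass ^ 2.
Proof.
  intros Hk.
  replace (cutoff (k + 2) - 2 * cutoff (k + 1) + cutoff k)
    with ((cutoff (k + 1 + 1) - cutoff (k + 1)) - (cutoff (k + 1) - cutoff k))
    by (replace (k + 1 + 1)%nat with (k + 2)%nat by lia; ring).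
  replace (cutoff (k + 2) - cutoff (k + 1)) with (cutoff (k + 1 + 1) - cutoff (k + 1))
    by (now replace (k + 1 + 1)%nat with (k + 2)%nat by lia).
  rewrite !cutoff_diff by lia. unfold cutoff_energy. field. lra.
Qed.

Lemma cutoff_ground_form_sum : (3 <= M)%nat ->
  fsum (ground_form cutoff) K <= 8 * sqrt 2 - 3 * sqrt 3 + fsum cutoff_energy K / cutoff_mass ^ 2.
Proof.
  intros HM.
  destruct ground_state_values as (G0 & G1 & G2 & G3).
  assert (v2 : cutoff 2 = 1) by (apply cutoff_eq1; lia).
  assert (v3 : cutoff 3 = 1) by (apply cutoff_eq1; lia).
  replace K with (2 + (K - 2))%nat at 1 by lia. rewrite fsum_split.
  assert (Hhead : fsum (ground_form cutoff) 2 = 8 * sqrt 2 - 3 * sqrt 3).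
  { simpl fsum. unfold ground_form. simpl Nat.add.
    change (cutoff 1) with 0. rewrite v2, v3, G0, G1, G2, G3. ring. }
  assert (Htail : fsum (fun i => ground_form cutoff (2 + i)) (K - 2)
                  <= fsum (fun i => cutoff_energy (2 + i) / cutoff_mass ^ 2
                                    + (flux cutoff (2 + S i) - flux cutoff (2 + i))) (K - 2)).
  { apply fsum_le. intros i _.
    replace (2 + S i)%nat with (2 + i + 1)%nat by lia.
    rewrite <- cutoff_energy_eq by lia. apply ground_form_le. }
  rewrite fsum_add, (fsum_telescope (fun i => flux cutoff (2 + i))) in Htail.
  assert (Hflux2 : flux cutoff (2 + 0) = 0) by (unfold flux; simpl Nat.add; rewrite v2, v3; ring).
  assert (HfluxK : flux cutoff (2 + (K - 2)) = 0).
  { unfold flux. replace (2 + (K - 2))%nat with K by lia. rewrite !cutoff_eq0 by lia. ring. }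
  assert (Henergy : fsum (fun i => cutoff_energy (2 + i) / cutoff_mass ^ 2) (K - 2)
                    <= fsum cutoff_energy K / cutoff_mass ^ 2).
  { unfold Rdiv. rewrite (fsum_ext _ (fun i => / cutoff_mass ^ 2 * cutoff_energy (2 + i)))
      by (intros; ring).
    rewrite fsum_scal, Rmult_comm.
    apply Rmult_le_compat_r; [apply Rlt_le, Rinv_0_lt_compat, pow_lt; lra|].
    replace K with (2 + (K - 2))%nat at 2 by lia. rewrite fsum_split.
    assert (0 <= fsum cutoff_energy 2) by (apply fsum_nonneg; intros; apply cutoff_energy_nonneg).
    lra. }
  lra.
Qed.

End Cutoff.

Lemma Cmod_RtoC_sq x : Cmod (RtoC x) ^ 2 = x ^ 2.
Proof. rewrite Cmod_R. apply pow2_abs. Qed.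

Lemma neg_lap_RtoC (w : nat -> R) k :
  neg_lap (fun n => RtoC (w n)) (k + 1) = RtoC (- w k + 2 * w (k + 1)%nat - w (k + 2)%nat).
Proof.
  replace (k + 1)%nat with (S k) by lia. replace (k + 2)%nat with (S (S k)) by lia.
  apply injective_projections; simpl; ring.
Qed.

Lemma rellich_finite_support rho (w : nat -> R) N : rellich_weight rho ->
  w 0%nat = 0 -> w 1%nat = 0 -> (forall k, (N <= k)%nat -> w k = 0) ->
  fsum (fun k => rho (k + 2)%nat * w (k + 2)%nat ^ 2) N <=
  fsum (fun k => (w k - 2 * w (k + 1)%nat + w (k + 2)%nat) ^ 2) N.
Proof.
  intros [_ Hrel] H0 H1 HN.
  set (u n := RtoC (w n)).
  assert (Hu : in_H02 u).
  { split; [|split].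
    - unfold u; now rewrite H0.
    - unfold u; now rewrite H1.
    - exists (fsum (fun n => Cmod (u n) ^ 2) N). apply is_series_fsum.
      intros k Hk. unfold u. rewrite Cmod_RtoC_sq, HN by assumption. ring. }
  destruct (Hrel u Hu) as [_ Hle].
  rewrite (Series_ext _ (fun k => rho (k + 2)%nat * w (k + 2)%nat ^ 2)) in Hle
    by (intros; unfold u; now rewrite Cmod_RtoC_sq).
  rewrite (Series_ext (fun k => Cmod (neg_lap u (k + 1)) ^ 2)
                     (fun k => (w k - 2 * w (k + 1)%nat + w (k + 2)%nat) ^ 2)) in Hle
    by (intros; unfold u; rewrite neg_lap_RtoC, Cmod_RtoC_sq; ring).
  rewrite !(Series_fsum _ N) in Hle; [exact Hle| |].
  - intros k Hk. rewrite !HN by lia. ring.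
  - intros k Hk. rewrite HN by lia. ring.
Qed.

Lemma rellich_excess_le_ground_form rho v K : rellich_weight rho ->
  v 1%nat = 0 -> (forall k, (K <= k)%nat -> v k = 0) ->
  fsum (fun k => (rho (k + 2)%nat - rho2 (k + 2)) * (ground_state (k + 2) * v (k + 2)%nat) ^ 2) K
  <= fsum (ground_form v) K.
Proof.
  intros Hrho Hv1 HvK.
  pose proof (ground_state_representation v K Hv1 HvK) as Hgsr. cbv zeta in Hgsr.
  destruct ground_state_values as [G0 _].
  pose proof (rellich_finite_support rho (fun k => ground_state k * v k) K Hrho) as Hrel.
  cbv beta in Hrel. rewrite Hgsr in Hrel.
  rewrite (fsum_ext _ (fun k => rho (k + 2)%nat * (ground_state (k + 2) * v (k + 2)%nat) ^ 2
                                - rho2 (k + 2) * (ground_state (k + 2) * v (k + 2)%nat) ^ 2))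
    by (intros; ring).
  rewrite fsum_sub.
  enough (fsum (fun k => rho (k + 2)%nat * (ground_state (k + 2) * v (k + 2)%nat) ^ 2) K
          <= fsum (ground_form v) K
             + fsum (fun k => rho2 (k + 2) * (ground_state (k + 2) * v (k + 2)%nat) ^ 2) K) by lra.
  apply Hrel.
  - rewrite G0. ring.
  - rewrite Hv1. ring.
  - intros k Hk. rewrite HvK by assumption. ring.
Qed.

Lemma cutoff_energy_ratio_small M eps : (1 <= M)%nat -> 0 < eps ->
  exists K, (M < K)%nat /\ 0 < cutoff_mass M K /\
            fsum (cutoff_energy M K) K / cutoff_mass M K ^ 2 <= eps.
Proof.
  intros HM Heps.
  set (c := INR M + 17). assert (Hc : 0 < c) by (unfold c; pose proof (pos_INR M); lra).
  destruct (harmonic_unbounded M (Rmax 2 (4 * c / eps)) HM) as [K [HMK HH]].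
  set (H := harmonic K - harmonic M) in HH.
  assert (H2 : 2 <= H) by (eapply Rle_trans; [apply Rmax_l|exact HH]).
  assert (Hc4 : 4 * c <= eps * H).
  { assert (Hratio : 4 * c / eps <= H) by (eapply Rle_trans; [apply Rmax_r|exact HH]).
    apply Rmult_le_reg_r with (/ eps); [apply Rinv_0_lt_compat; lra|].
    replace (eps * H * / eps) with H by (field; lra). exact Hratio. }
  pose proof (cutoff_mass_ge M K HMK) as Hmass. fold H in Hmass.
  pose proof (cutoff_energy_sum M K HMK HM) as Henergy. fold H in Henergy.
  exists K. split; [exact HMK|]. split; [lra|].
  set (S := cutoff_mass M K) in *.
  assert (HS : 0 < S) by lra.
  apply Rmult_le_reg_r with (S ^ 2); [apply pow_lt; lra|].
  replace (fsum (cutoff_energy M K) K / S ^ 2 * S ^ 2) with (fsum (cutoff_energy M K) K)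
    by (field; lra).
  assert (H ^ 2 <= 4 * S ^ 2) by nra.
  assert (INR M + 6 + 11 * H <= c * H) by (unfold c; pose proof (pos_INR M); nra).
  nra.
Qed.

Definition rellich_excess (rho : nat -> R) (k : nat) : R :=
  INR (k + 2) ^ 3 * (rho (k + 2)%nat - rho2 (k + 2)).

Lemma rellich_excess_partial_le rho :
  rellich_weight rho -> (forall n, (2 <= n)%nat -> rho2 n <= rho n) ->
  forall n eps, 0 < eps -> fsum (rellich_excess rho) n <= 8 * sqrt 2 - 3 * sqrt 3 + eps.
Proof.
  intros Hrho Hge n eps Heps.
  set (M := (n + 3)%nat).
  destruct (cutoff_energy_ratio_small M eps ltac:(lia) Heps) as (K & HMK & Hmass & Hsmall).
  set (v := cutoff M K).
  assert (Hprefix : fsum (rellich_excess rho) n <=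
    fsum (fun k => (rho (k + 2)%nat - rho2 (k + 2))
                   * (ground_state (k + 2) * v (k + 2)%nat) ^ 2) K).
  { apply fsum_le_extend; [lia| |].
    - intros k Hk. unfold rellich_excess, v.
      rewrite (cutoff_eq1 M K (k + 2)%nat), <- ground_state_sq by lia. ring.
    - intros k _. apply Rmult_le_pos; [|apply pow2_ge_0].
      specialize (Hge (k + 2)%nat ltac:(lia)). lra. }
  pose proof (rellich_excess_le_ground_form rho v K Hrho eq_refl
                (cutoff_eq0 M K HMK Hmass)) as Hrellich.
  pose proof (cutoff_ground_form_sum M K HMK Hmass ltac:(lia)) as Hform.
  fold v in Hform. lra.
Qed.

Theorem theorem3p2 (rho : nat -> R) :
  rellich_weight rho ->
  (forall n, (2 <= n)%nat -> rho2 n <= rho n) ->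
  ex_series (fun k => (INR (k + 2))^3 * (rho (k + 2)%nat - rho2 (k + 2)%nat)) /\
  Series (fun k => (INR (k + 2))^3 * (rho (k + 2)%nat - rho2 (k + 2)%nat))
    <= 8 * sqrt 2 - 3 * sqrt 3.
Proof.
  intros Hrho Hge.
  apply (series_nonneg_bounded (rellich_excess rho)).
  - intros k. apply Rmult_le_pos; [apply pow_le, pos_INR|].
    specialize (Hge (k + 2)%nat ltac:(lia)). lra.
  - intros n. apply Rle_plus_epsilon. exact (rellich_excess_partial_le rho Hrho Hge n).
Qed.
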